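(* Let $N^{[0]}$ be a $C^0$ net on the grid $T^{[0]}$ with lines $s^{[0]}_i=t^{[0]}_i=i$, $i\in\mathbb{Z}$, and let $N^{[k]}$, $k\ge0$, be the nets generated from $N^{[0]}$ by the corner cutting algorithm for nets of functions (described in the context) with arbitrary weights $\boldsymbol{\gamma}^{[s],[k]},\boldsymbol{\gamma}^{[t],[k]}\in\mathscr{W}$. If $N^{[0]}$ has the BMSDD property with constant $L$, then $N^{[k]}$ has the BMSDD property with constant $3^kL$ for every $k\ge0$.
   Context: $\mathscr{W}$ is the set of pairs $(\boldsymbol{\alpha},\boldsymbol{\beta})$ of real bi-infinite sequences with $\inf_i\min\{\alpha_i,1-\beta_i,\beta_i-\alpha_i\}>0$. For strictly increasing bi-infinite real sequences $(s_i)$, $(t_j)$, unbounded above and below, the grid is $T=\bigcup_i\{s_i\}\times\mathbb{R}\cup\bigcup_j\mathbb{R}\times\{t_j\}$. A net $N(T)$ is a function on $T$ with values in $\mathbb{R}^m$; it is $C^0$ if all u-functions $s\mapsto N(s,t_j)$, $t\mapsto N(s_i,t)$ are continuous. The piecewise Coons patch $\mathcal{C}(N)$ is defined on each rectangle $[s_i,s_{i+1}]\times[t_j,t_{j+1}]$, with $h_1=s_{i+1}-s_i$, $h_2=t_{j+1}-t_j$, by $\mathcal{C}(N)(s,t)=\frac{s_{i+1}-s}{h_1}N(s_i,t)+\frac{s-s_i}{h_1}N(s_{i+1},t)+\frac{t_{j+1}-t}{h_2}N(s,t_j)+\frac{t-t_j}{h_2}N(s,t_{j+1})-B(s,t)$,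 with $B(s,t)=\frac{s_{i+1}-s}{h_1}\big(\frac{t_{j+1}-t}{h_2}N(s_i,t_j)+\frac{t-t_j}{h_2}N(s_i,t_{j+1})\big)+\frac{s-s_i}{h_1}\big(\frac{t_{j+1}-t}{h_2}N(s_{i+1},t_j)+\frac{t-t_j}{h_2}N(s_{i+1},t_{j+1})\big)$. Algorithm: given $N^{[k]}$ on grid $T^{[k]}$ with lines $s^{[k]}_i,t^{[k]}_j$, set $s^{[k+1]}_{2i}=(1-\alpha^{[s],[k]}_i)s^{[k]}_i+\alpha^{[s],[k]}_is^{[k]}_{i+1}$, $s^{[k+1]}_{2i+1}=(1-\beta^{[s],[k]}_i)s^{[k]}_i+\beta^{[s],[k]}_is^{[k]}_{i+1}$, and analogously for $t^{[k+1]}$ with $\boldsymbol{\gamma}^{[t],[k]}=(\boldsymbol{\alpha}^{[t],[k]},\boldsymbol{\beta}^{[t],[k]})$; $T^{[k+1]}$ is the grid with these lines and $N^{[k+1]}=\mathcal{C}(N^{[k]})|_{T^{[k+1]}}$. For $\sigma_1\ne\sigma_2$, $\tau_1\ne\tau_2$, $[\sigma_1,\sigma_2;\tau_1,\tau_2]N=\frac{N(\sigma_1,\tau_1)+N(\sigma_2,\tau_2)-N(\sigma_2,\tau_1)-N(\sigma_1,\tau_2)}{(\sigma_1-\sigma_2)(\tau_1-\tau_2)}$; a net on a grid has the BMSDD property with constant $L$ if $\|[\sigma_1,\sigma_2;\tau_1,\tau_2]N\|_\infty\le L$ whenever all four points $(\sigma_i,\tau_j)$ lie on the grid. *)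

From Stdlib Require Import Reals ZArith Lra.
Open Scope R_scope.

(* A net with values in R^m is represented as N : R -> R -> nat -> R,
   N s t c being the c-th coordinate (only c < m is relevant; only points
   of the grid are relevant). *)
Definition net := R -> R -> nat -> R.

Definition in_W (a b : Z -> R) : Prop :=
  exists d : R, 0 < d /\
    forall i : Z, d <= a i /\ d <= 1 - b i /\ d <= b i - a i.

(* grid lines at level k generated by the algorithm from s^[0]_i = i:
   s^[k+1]_{2i} = (1-a_i) s^[k]_i + a_i s^[k]_{i+1},
   s^[k+1]_{2i+1} = (1-b_i) s^[k]_i + b_i s^[k]_{i+1}.
   (Z.div2 is floor division by 2, so i = 2 (Z.div2 i) + Z.odd i.) *)
Fixpoint lines (a b : nat -> Z -> R) (k : nat) (i : Z) : R :=
  match k with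
  | O => IZR i
  | S k' =>
      let i' := Z.div2 i in
      let w := if Z.odd i then b k' i' else a k' i' in
      (1 - w) * lines a b k' i' + w * lines a b k' (i' + 1)%Z
  end.

Definition on_grid (sl tl : Z -> R) (s t : R) : Prop :=
  (exists i, s = sl i) \/ (exists j, t = tl j).

Definition coons (N : net) (s0 s1 t0 t1 s t : R) (c : nat) : R :=
  let h1 := s1 - s0 in
  let h2 := t1 - t0 in
  let B := (s1 - s) / h1 * ((t1 - t) / h2 * N s0 t0 c + (t - t0) / h2 * N s0 t1 c)
         + (s - s0) / h1 * ((t1 - t) / h2 * N s1 t0 c + (t - t0) / h2 * N s1 t1 c) in
  (s1 - s) / h1 * N s0 t c + (s - s0) / h1 * N s1 t c
  + (t1 - t) / h2 * N s t0 c + (t - t0) / h2 * N s t1 c - B.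

(* N^[k+1] = C(N^[k]) restricted to T^[k+1]: at every point of T^[k+1],
   on every rectangle of T^[k] containing it, N^[k+1] equals the Coons patch. *)
Definition coons_step (N N' : net) (sl tl sl' tl' : Z -> R) : Prop :=
  forall (i j : Z) (s t : R) (c : nat),
    on_grid sl' tl' s t ->
    sl i <= s <= sl (i + 1)%Z -> tl j <= t <= tl (j + 1)%Z ->
    N' s t c = coons N (sl i) (sl (i + 1)%Z) (tl j) (tl (j + 1)%Z) s t c.

Definition C0_net (m : nat) (N : net) (sl tl : Z -> R) : Prop :=
  forall c : nat, (c < m)%nat ->
    (forall j : Z, continuity (fun s => N s (tl j) c)) /\
    (forall i : Z, continuity (fun t => N (sl i) t c)).

Definition divdiff (N : net) (s1 s2 t1 t2 : R) (c : nat) : R :=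
  (N s1 t1 c + N s2 t2 c - N s2 t1 c - N s1 t2 c) / ((s1 - s2) * (t1 - t2)).

Definition BMSDD (m : nat) (N : net) (sl tl : Z -> R) (L : R) : Prop :=
  forall s1 s2 t1 t2 : R, s1 <> s2 -> t1 <> t2 ->
    on_grid sl tl s1 t1 -> on_grid sl tl s1 t2 ->
    on_grid sl tl s2 t1 -> on_grid sl tl s2 t2 ->
    forall c : nat, (c < m)%nat -> Rabs (divdiff N s1 s2 t1 t2 c) <= L.

From Stdlib Require Import Reals ZArith Lra Lia Psatz.
Open Scope R_scope.

(* A Coons patch is the sum of the two ruled surfaces interpolating N linearly in s and in t,
   minus the bilinear interpolant of the corner values. Each of the three terms is a piecewise
   linear interpolant, and piecewise linear interpolation of data with slopes bounded by K is
   K-Lipschitz across cells. Applied to differences of N along grid lines, whose slopes are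
   divided differences of N on the old grid, this bounds the cross difference of each term over
   four new grid points by L |s1 - s2| |t1 - t2|; the triangle inequality gives 3 L per step.
   The weights in W only serve to keep every family of grid lines strictly increasing and
   covering R. *)

Definition cell (sl : Z -> R) (i : Z) (x : R) : Prop := sl i <= x <= sl (i + 1)%Z.

Definition slopes_le (sl d : Z -> R) (K : R) : Prop :=
  forall i, Rabs (d (i + 1)%Z - d i) <= K * (sl (i + 1)%Z - sl i).

Section PiecewiseLinear.

Variable sl : Z -> R.
Hypothesis sl_incr : forall i, sl i < sl (i + 1)%Z.

Definition interp (d : Z -> R) (i : Z) (x : R) : R :=
  (sl (i + 1)%Z - x) / (sl (i + 1)%Z - sl i) * d i
  + (x - sl i) / (sl (i + 1)%Z - sl i) * d (i + 1)%Z.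

Lemma knots_le i j : (i <= j)%Z -> sl i <= sl j.
Proof.
  intros Hij. replace j with (i + Z.of_nat (Z.to_nat (j - i)))%Z by lia.
  induction (Z.to_nat (j - i)) as [|n IH].
  - rewrite Z.add_0_r. lra.
  - rewrite Nat2Z.inj_succ, Z.add_succ_r. unfold Z.succ.
    pose proof (sl_incr (i + Z.of_nat n)). lra.
Qed.

Lemma interp_knot_left d i : interp d i (sl i) = d i.
Proof. pose proof (sl_incr i). unfold interp. field. lra. Qed.

Lemma interp_knot_right d i : interp d i (sl (i + 1)%Z) = d (i + 1)%Z.
Proof. pose proof (sl_incr i). unfold interp. field. lra. Qed.

Lemma interp_lipschitz_piece d K i x1 x2 :
  slopes_le sl d K -> Rabs (interp d i x1 - interp d i x2) <= K * Rabs (x1 - x2).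
Proof.
  intros Hd. pose proof (sl_incr i) as Hi. specialize (Hd i).
  set (h := sl (i + 1)%Z - sl i) in *.
  assert (Hdiff : interp d i x1 - interp d i x2 = (x1 - x2) * ((d (i + 1)%Z - d i) / h)).
  { unfold interp. fold h. field. unfold h. lra. }
  rewrite Hdiff, Rabs_mult, Rmult_comm.
  apply Rmult_le_compat_r; [apply Rabs_pos|].
  unfold Rdiv. rewrite Rabs_mult, Rabs_inv, (Rabs_right h) by (unfold h; lra).
  apply (Rmult_le_reg_r h); [unfold h; lra|].
  rewrite Rmult_assoc, Rinv_l by (unfold h; lra). lra.
Qed.

Lemma interp_lipschitz_up d K i1 x1 :
  slopes_le sl d K -> cell sl i1 x1 ->
  forall n x2, cell sl (i1 + Z.of_nat n) x2 ->
  Rabs (interp d i1 x1 - interp d (i1 + Z.of_nat n)%Z x2) <= K * Rabs (x1 - x2).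
Proof.
  intros Hd Hx1 n. induction n as [|n IH]; intros x2 Hx2.
  - rewrite Z.add_0_r. apply interp_lipschitz_piece, Hd.
  - rewrite Nat2Z.inj_succ, Z.add_succ_r in *. unfold Z.succ in *.
    set (j := (i1 + Z.of_nat n)%Z) in *.
    set (y := sl (j + 1)%Z).
    (* split the path from x1 to x2 at the knot y shared by the last two pieces *)
    assert (Hfirst : Rabs (interp d i1 x1 - interp d j y) <= K * Rabs (x1 - y)).
    { apply IH. unfold cell, y. pose proof (sl_incr j). lra. }
    assert (Hlast : Rabs (interp d (j + 1)%Z y - interp d (j + 1)%Z x2) <= K * Rabs (y - x2))
      by apply interp_lipschitz_piece, Hd.
    assert (Hknot : interp d j y = interp d (j + 1)%Z y).
    { unfold y. rewrite interp_knot_right, interp_knot_left. reflexivity. }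
    assert (Hx1y : x1 <= y).
    { pose proof (knots_le (i1 + 1) (j + 1) ltac:(unfold j; lia)). unfold cell, y in *. lra. }
    assert (Hyx2 : y <= x2) by (unfold cell, y in *; lra).
    replace (interp d i1 x1 - interp d (j + 1)%Z x2)
      with ((interp d i1 x1 - interp d j y) + (interp d (j + 1)%Z y - interp d (j + 1)%Z x2))
      by (rewrite Hknot; ring).
    eapply Rle_trans; [apply Rabs_triang|].
    rewrite (Rabs_left1 (x1 - y)) in Hfirst by lra.
    rewrite (Rabs_left1 (y - x2)) in Hlast by lra.
    rewrite (Rabs_left1 (x1 - x2)) by lra. lra.
Qed.

Lemma interp_lipschitz d K i1 i2 x1 x2 :
  slopes_le sl d K -> cell sl i1 x1 -> cell sl i2 x2 ->
  Rabs (interp d i1 x1 - interp d i2 x2) <= K * Rabs (x1 - x2).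
Proof.
  intros Hd Hx1 Hx2. destruct (Z.le_ge_cases i1 i2).
  - replace i2 with (i1 + Z.of_nat (Z.to_nat (i2 - i1)))%Z in * by lia.
    apply interp_lipschitz_up; assumption.
  - replace i1 with (i2 + Z.of_nat (Z.to_nat (i1 - i2)))%Z in * by lia.
    rewrite Rabs_minus_sym, (Rabs_minus_sym x1).
    apply interp_lipschitz_up; assumption.
Qed.

Lemma Rabs_knot_gap i : Rabs (sl i - sl (i + 1)%Z) = sl (i + 1)%Z - sl i.
Proof. pose proof (sl_incr i). rewrite Rabs_left1 by lra. ring. Qed.

End PiecewiseLinear.

Lemma in_W_bounds a b i : in_W a b -> 0 < a i /\ a i < b i /\ b i < 1.
Proof. intros [d [Hd H]]. destruct (H i). lra. Qed.

Lemma Zdiv2_double i : Z.div2 (2 * i) = i.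
Proof. pose proof (Z.div2_odd (2 * i)) as H. rewrite Z.odd_even in H. cbn [Z.b2z] in H. lia. Qed.

Lemma Zdiv2_double_plus1 i : Z.div2 (2 * i + 1) = i.
Proof. pose proof (Z.div2_odd (2 * i + 1)) as H. rewrite Z.odd_odd in H. cbn [Z.b2z] in H. lia. Qed.

Section Lines.

Variables a b : nat -> Z -> R.

Lemma lines_S_even k i :
  lines a b (S k) (2 * i) = (1 - a k i) * lines a b k i + a k i * lines a b k (i + 1).
Proof. cbn [lines]. rewrite Z.odd_even, Zdiv2_double. reflexivity. Qed.

Lemma lines_S_odd k i :
  lines a b (S k) (2 * i + 1) = (1 - b k i) * lines a b k i + b k i * lines a b k (i + 1).
Proof. cbn [lines]. rewrite Z.odd_odd, Zdiv2_double_plus1. reflexivity. Qed.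

Lemma lines_refine k i :
  in_W (a k) (b k) -> lines a b k i < lines a b k (i + 1) ->
  lines a b k i < lines a b (S k) (2 * i) /\
  lines a b (S k) (2 * i) < lines a b (S k) (2 * i + 1) /\
  lines a b (S k) (2 * i + 1) < lines a b k (i + 1).
Proof.
  intros HW Hi. destruct (in_W_bounds _ _ i HW) as (Ha & Hab & Hb).
  rewrite lines_S_even, lines_S_odd. repeat split; nra.
Qed.

Hypothesis HW : forall k, in_W (a k) (b k).

Lemma lines_incr k i : lines a b k i < lines a b k (i + 1).
Proof.
  revert i. induction k as [|k IH]; intros i.
  - cbn [lines]. rewrite plus_IZR. lra.
  - destruct (Z.Even_or_Odd i) as [[q ->]|[q ->]].
    + apply (lines_refine k q (HW k) (IH q)).
    + replace (2 * q + 1 + 1)%Z with (2 * (q + 1))%Z by lia.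
      pose proof (lines_refine k q (HW k) (IH q)).
      pose proof (lines_refine k (q + 1) (HW k) (IH (q + 1)%Z)).
      lra.
Qed.

Lemma lines_cover k x : exists i, cell (lines a b k) i x.
Proof.
  revert x. induction k as [|k IH]; intros x.
  - exists (up x - 1)%Z. destruct (archimed x). unfold cell. cbn [lines].
    rewrite minus_IZR. replace (up x - 1 + 1)%Z with (up x) by lia. lra.
  - destruct (IH x) as [q Hq]. unfold cell in *.
    (* the cell q at level k lies between the lines 2q-1 and 2q+2 of level k+1 *)
    pose proof (lines_refine k (q - 1) (HW k) (lines_incr k (q - 1))) as Hprev.
    pose proof (lines_refine k q (HW k) (lines_incr k q)).
    pose proof (lines_refine k (q + 1) (HW k) (lines_incr k (q + 1))) as Hnext.
    replace (q - 1 + 1)%Z with q in Hprev by lia.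
    replace (2 * (q - 1) + 1)%Z with (2 * q - 1)%Z in Hprev by lia.
    destruct (Rle_dec x (lines a b (S k) (2 * q))).
    + exists (2 * q - 1)%Z. replace (2 * q - 1 + 1)%Z with (2 * q)%Z by lia. lra.
    + destruct (Rle_dec x (lines a b (S k) (2 * q + 1))).
      * exists (2 * q)%Z. lra.
      * exists (2 * q + 1)%Z. replace (2 * q + 1 + 1)%Z with (2 * (q + 1))%Z by lia. lra.
Qed.

End Lines.

Definition cross (N : net) (c : nat) (s1 s2 t1 t2 : R) : R :=
  N s1 t1 c + N s2 t2 c - N s2 t1 c - N s1 t2 c.

Lemma Rabs_div_mult_le x y z M :
  y <> 0 -> z <> 0 -> Rabs (x / (y * z)) <= M <-> Rabs x <= M * Rabs y * Rabs z.
Proof.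
  intros Hy Hz.
  assert (Hyz : 0 < Rabs y * Rabs z) by (apply Rmult_lt_0_compat; apply Rabs_pos_lt; assumption).
  unfold Rdiv. rewrite Rabs_mult, Rabs_inv, Rabs_mult, Rmult_assoc.
  split; intros H.
  - apply (Rmult_le_compat_r (Rabs y * Rabs z)) in H; [|lra].
    rewrite Rmult_assoc, Rinv_l in H by lra. lra.
  - apply (Rmult_le_reg_r (Rabs y * Rabs z)); [assumption|].
    rewrite Rmult_assoc, Rinv_l by lra. lra.
Qed.

Lemma BMSDD_cross m N sl tl L :
  BMSDD m N sl tl L <->
  forall s1 s2 t1 t2,
    on_grid sl tl s1 t1 -> on_grid sl tl s1 t2 ->
    on_grid sl tl s2 t1 -> on_grid sl tl s2 t2 ->
    forall c, (c < m)%nat ->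
    Rabs (cross N c s1 s2 t1 t2) <= L * Rabs (s1 - s2) * Rabs (t1 - t2).
Proof.
  split; intros HB s1 s2 t1 t2.
  - intros G11 G12 G21 G22 c Hc.
    destruct (Req_dec s1 s2) as [<-|Hs]; [|destruct (Req_dec t1 t2) as [<-|Ht]].
    + replace (cross N c s1 s1 t1 t2) with 0 by (unfold cross; ring).
      rewrite Rminus_diag, Rabs_R0. lra.
    + replace (cross N c s1 s2 t1 t1) with 0 by (unfold cross; ring).
      rewrite Rminus_diag, Rabs_R0. lra.
    + apply Rabs_div_mult_le; try lra. apply HB; assumption.
  - intros Hs Ht G11 G12 G21 G22 c Hc.
    apply Rabs_div_mult_le; try lra. apply HB; assumption.
Qed.

Section CoonsCross.

Variables (N : net) (c : nat) (sl tl : Z -> R) (L : R).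
Hypothesis sl_incr : forall i, sl i < sl (i + 1)%Z.
Hypothesis tl_incr : forall j, tl j < tl (j + 1)%Z.
Hypothesis cross_on_s_lines : forall i t1 t2,
  Rabs (cross N c (sl i) (sl (i + 1)%Z) t1 t2)
  <= L * Rabs (sl i - sl (i + 1)%Z) * Rabs (t1 - t2).
Hypothesis cross_on_t_lines : forall j s1 s2,
  Rabs (cross N c s1 s2 (tl j) (tl (j + 1)%Z))
  <= L * Rabs (s1 - s2) * Rabs (tl j - tl (j + 1)%Z).

Variables (i1 i2 j1 j2 : Z) (s1 s2 t1 t2 : R).
Hypotheses (Hs1 : cell sl i1 s1) (Hs2 : cell sl i2 s2).
Hypotheses (Ht1 : cell tl j1 t1) (Ht2 : cell tl j2 t2).

Definition ruled_s_cross : R :=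
  let d i := N (sl i) t1 c - N (sl i) t2 c in
  interp sl d i1 s1 - interp sl d i2 s2.

Definition ruled_t_cross : R :=
  let d j := N s1 (tl j) c - N s2 (tl j) c in
  interp tl d j1 t1 - interp tl d j2 t2.

Definition bilinear_cross : R :=
  let d i := interp tl (fun j => N (sl i) (tl j) c) j1 t1
           - interp tl (fun j => N (sl i) (tl j) c) j2 t2 in
  interp sl d i1 s1 - interp sl d i2 s2.

Lemma coons_cross_split :
  coons N (sl i1) (sl (i1 + 1)%Z) (tl j1) (tl (j1 + 1)%Z) s1 t1 c
  + coons N (sl i2) (sl (i2 + 1)%Z) (tl j2) (tl (j2 + 1)%Z) s2 t2 c
  - coons N (sl i2) (sl (i2 + 1)%Z) (tl j1) (tl (j1 + 1)%Z) s2 t1 c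
  - coons N (sl i1) (sl (i1 + 1)%Z) (tl j2) (tl (j2 + 1)%Z) s1 t2 c
  = ruled_s_cross + ruled_t_cross - bilinear_cross.
Proof. unfold coons, ruled_s_cross, ruled_t_cross, bilinear_cross, interp. ring. Qed.

Lemma ruled_s_cross_le : Rabs ruled_s_cross <= L * Rabs (s1 - s2) * Rabs (t1 - t2).
Proof.
  unfold ruled_s_cross. cbv zeta.
  replace (L * Rabs (s1 - s2) * Rabs (t1 - t2)) with (L * Rabs (t1 - t2) * Rabs (s1 - s2)) by ring.
  apply interp_lipschitz; try assumption.
  intros i. cbv beta.
  specialize (cross_on_s_lines i t1 t2). rewrite Rabs_knot_gap in cross_on_s_lines by assumption.
  replace (N (sl (i + 1)%Z) t1 c - N (sl (i + 1)%Z) t2 c - (N (sl i) t1 c - N (sl i) t2 c))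
    with (- cross N c (sl i) (sl (i + 1)%Z) t1 t2) by (unfold cross; ring).
  rewrite Rabs_Ropp. lra.
Qed.

Lemma ruled_t_cross_le : Rabs ruled_t_cross <= L * Rabs (s1 - s2) * Rabs (t1 - t2).
Proof.
  unfold ruled_t_cross. cbv zeta.
  apply interp_lipschitz; try assumption.
  intros j. cbv beta.
  specialize (cross_on_t_lines j s1 s2). rewrite Rabs_knot_gap in cross_on_t_lines by assumption.
  replace (N s1 (tl (j + 1)%Z) c - N s2 (tl (j + 1)%Z) c - (N s1 (tl j) c - N s2 (tl j) c))
    with (- cross N c s1 s2 (tl j) (tl (j + 1)%Z)) by (unfold cross; ring).
  rewrite Rabs_Ropp. lra.
Qed.

Lemma bilinear_cross_le : Rabs bilinear_cross <= L * Rabs (s1 - s2) * Rabs (t1 - t2).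
Proof.
  unfold bilinear_cross. cbv zeta.
  replace (L * Rabs (s1 - s2) * Rabs (t1 - t2)) with (L * Rabs (t1 - t2) * Rabs (s1 - s2)) by ring.
  apply interp_lipschitz; try assumption.
  intros i. cbv beta.
  (* the s-slope of the bilinear interpolant is itself a t-interpolant *)
  set (g j := N (sl (i + 1)%Z) (tl j) c - N (sl i) (tl j) c).
  replace (_ - _ - (_ - _)) with (interp tl g j1 t1 - interp tl g j2 t2)
    by (unfold g, interp; ring).
  replace (L * Rabs (t1 - t2) * (sl (i + 1)%Z - sl i))
    with (L * (sl (i + 1)%Z - sl i) * Rabs (t1 - t2)) by ring.
  apply interp_lipschitz; try assumption.
  intros j. unfold g.
  specialize (cross_on_s_lines i (tl j) (tl (j + 1)%Z)).
  rewrite !Rabs_knot_gap in cross_on_s_lines by assumption.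
  replace (_ - _ - (_ - _))
    with (cross N c (sl i) (sl (i + 1)%Z) (tl j) (tl (j + 1)%Z)) by (unfold cross; ring).
  lra.
Qed.

Lemma coons_cross_le :
  Rabs (coons N (sl i1) (sl (i1 + 1)%Z) (tl j1) (tl (j1 + 1)%Z) s1 t1 c
      + coons N (sl i2) (sl (i2 + 1)%Z) (tl j2) (tl (j2 + 1)%Z) s2 t2 c
      - coons N (sl i2) (sl (i2 + 1)%Z) (tl j1) (tl (j1 + 1)%Z) s2 t1 c
      - coons N (sl i1) (sl (i1 + 1)%Z) (tl j2) (tl (j2 + 1)%Z) s1 t2 c)
  <= 3 * L * Rabs (s1 - s2) * Rabs (t1 - t2).
Proof.
  rewrite coons_cross_split.
  pose proof ruled_s_cross_le. pose proof ruled_t_cross_le. pose proof bilinear_cross_le.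
  pose proof (Rabs_triang ruled_s_cross ruled_t_cross).
  eapply Rle_trans; [apply Rabs_triang|]. rewrite Rabs_Ropp. lra.
Qed.

End CoonsCross.

Lemma BMSDD_coons_step m N N' sl tl sl' tl' L :
  (forall i, sl i < sl (i + 1)%Z) -> (forall j, tl j < tl (j + 1)%Z) ->
  (forall x, exists i, cell sl i x) -> (forall y, exists j, cell tl j y) ->
  coons_step N N' sl tl sl' tl' ->
  BMSDD m N sl tl L -> BMSDD m N' sl' tl' (3 * L).
Proof.
  intros Hs Ht Cs Ct Hstep HB. rewrite BMSDD_cross in *.
  intros s1 s2 t1 t2 G11 G12 G21 G22 c Hc.
  destruct (Cs s1) as [i1 Hs1], (Cs s2) as [i2 Hs2].
  destruct (Ct t1) as [j1 Ht1], (Ct t2) as [j2 Ht2].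
  unfold cross.
  rewrite (Hstep i1 j1 s1 t1 c G11 Hs1 Ht1), (Hstep i1 j2 s1 t2 c G12 Hs1 Ht2),
          (Hstep i2 j1 s2 t1 c G21 Hs2 Ht1), (Hstep i2 j2 s2 t2 c G22 Hs2 Ht2).
  apply coons_cross_le; try assumption.
  - intros i t t'. apply HB; try assumption; left; eexists; reflexivity.
  - intros j s s'. apply HB; try assumption; right; eexists; reflexivity.
Qed.

Theorem corollary3
  (m : nat) (L : R)
  (as_ bs at_ bt : nat -> Z -> R)
  (N : nat -> net)
  (HWs : forall k : nat, in_W (as_ k) (bs k))
  (HWt : forall k : nat, in_W (at_ k) (bt k))
  (HC0 : C0_net m (N O) (lines as_ bs O) (lines at_ bt O))
  (Hstep : forall k : nat,
      coons_step (N k) (N (S k))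
        (lines as_ bs k) (lines at_ bt k)
        (lines as_ bs (S k)) (lines at_ bt (S k)))
  (HL : BMSDD m (N O) (lines as_ bs O) (lines at_ bt O) L) :
  forall k : nat,
    BMSDD m (N k) (lines as_ bs k) (lines at_ bt k) (3 ^ k * L).
Proof.
  induction k as [|k IH].
  - rewrite pow_O, Rmult_1_l. exact HL.
  - rewrite <- tech_pow_Rmult, Rmult_assoc.
    apply (BMSDD_coons_step m (N k) (N (S k)) (lines as_ bs k) (lines at_ bt k));
      auto using lines_incr, lines_cover.
Qed.
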